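(* Let $X$ be a finite $T_0$ topological space, $\mathcal V$ a multivector field on $X$ with $X$ invariant, and $\mathcal M=\{M_p\mid p\in\mathbb P\}$ a Morse predecomposition of $X$. Let $C\subset X$ be an isolated invariant set which is strongly connected in $G_{\mathcal V}$. If there is $r\in\mathbb P_C$ such that $M_r$ is saturated in $X$, then $C\subset M_r$; in particular $\mathbb P_C=\{r\}$.
   Context: Notation: $\operatorname{cl}$ is closure; $A\subset X$ is locally closed if $\operatorname{cl}A\setminus A$ is closed. A multivector field $\mathcal V$ on $X$ is a partition of $X$ into locally closed sets (multivectors); $[x]_{\mathcal V}$ is the multivector containing $x$. A multivector $V$ is critical if $H(\operatorname{cl}V,\operatorname{cl}V\setminus V)$ (relative singular homology) is nontrivial, regular otherwise. $A$ is $\mathcal V$-compatible if it is a union of multivectors; $\langle A\rangle_{\mathcal V}$ is the smallest locally closed $\mathcal V$-compatible set containing $A$. $\Pi_{\mathcal V}(x)=\operatorname{cl}\{x\}\cup[x]_{\mathcal V}$; $G_{\mathcal V}$ is the digraph on $X$ with an edge $x\to y$ iff $y\in\Pi_{\mathcal V}(x)$; a set $A$ is strongly connected in $G_{\mathcal V}$ if for all $v,w\in A$ there is a walk of positive length from $v$ to $w$ with all vertices in $A$. A solution is a partial map $\gamma:\mathbb Z\nrightarrow X$ with domain an integer interval and $\gamma(t+1)\in\Pi_{\mathcal V}(\gamma(t))$; a path has finite domain; a full solution has domain $\mathbb Z$. $\alpha(\gamma)=\langle\bigcap_{t\le0}\gamma((-\infty,t])\rangle_{\mathcal V}$, $\omega(\gamma)=\langle\bigcap_{t\ge0}\gamma([t,\infty))\rangle_{\mathcal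 V}$. A full solution is essential unless $\alpha(\gamma)$ or $\omega(\gamma)$ lies in a single regular multivector; an essential solution in $A$ has image in $A$. $\operatorname{Inv}S$ is the set of $x\in S$ with an essential solution $\gamma$ in $S$, $\gamma(0)=x$; $S$ is invariant if $\operatorname{Inv}S=S$. An invariant $S$ is isolated invariant if there is a closed $N\supset\Pi_{\mathcal V}(S)$ such that every path in $N$ with endpoints in $S$ has image in $S$. A link from $S_1$ to $S_2$ is a full solution with $\alpha(\gamma)\cap S_1\ne\emptyset\ne\omega(\gamma)\cap S_2$. A Morse predecomposition of $X$ is an indexed family $\{M_p\mid p\in\mathbb P\}$ of mutually disjoint isolated invariant subsets such that every essential solution in $X$ is a link from some $M_p$ to some $M_q$. $\mathbb P_C=\{p\in\mathbb P\mid M_p\cap C\ne\emptyset\}$. An invariant $T\subset X$ is saturated in $X$ if every essential solution $\gamma$ in $X$ with $\alpha(\gamma)\subset T$ and $\omega(\gamma)\subset T$ has $\operatorname{im}\gamma\subset T$. *)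

From Stdlib Require Import Reals ZArith List ClassicalEpsilon.
Import ListNotations.

Set Implicit Arguments.

Definition incl_set {X : Type} (A B : X -> Prop) : Prop := forall x, A x -> B x.
Definition setD {X : Type} (A B : X -> Prop) : X -> Prop := fun x => A x /\ ~ B x.

Definition is_topology {X : Type} (opn : (X -> Prop) -> Prop) : Prop :=
  opn (fun _ => True) /\ opn (fun _ => False) /\
  (forall U V, opn U -> opn V -> opn (fun x => U x /\ V x)) /\
  (forall F : (X -> Prop) -> Prop, (forall U, F U -> opn U) ->
      opn (fun x => exists U, F U /\ U x)).

Definition finite_T0_space {X : Type} (opn : (X -> Prop) -> Prop) : Prop :=
  is_topology opn /\
  (exists l : list X, forall x, In x l) /\
  (forall x y : X, x <> y -> exists U, opn U /\ ~ (U x <-> U y)).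

Definition is_closed {X : Type} (opn : (X -> Prop) -> Prop) (A : X -> Prop) : Prop :=
  opn (fun x => ~ A x).

Definition cl {X : Type} (opn : (X -> Prop) -> Prop) (A : X -> Prop) : X -> Prop :=
  fun x => forall U, opn U -> U x -> exists y, U y /\ A y.

Definition locally_closed {X : Type} (opn : (X -> Prop) -> Prop) (A : X -> Prop) : Prop :=
  is_closed opn (setD (cl opn A) A).

(* points of R^(n+1) are encoded as functions nat -> R; the standard
   n-simplex uses coordinates 0..n and vanishes elsewhere *)
Definition simplex (n : nat) (p : nat -> R) : Prop :=
  (forall i, (i <= n)%nat -> (0 <= p i)%R) /\
  (forall i, (n < i)%nat -> p i = 0%R) /\
  sum_f_R0 p n = 1%R.

Definition simplex_open (n : nat) (S : (nat -> R) -> Prop) : Prop :=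
  forall p, simplex n p -> S p ->
    exists eps : R, (0 < eps)%R /\
      forall q, simplex n q -> (forall i, (i <= n)%nat -> (Rabs (q i - p i) < eps)%R) -> S q.

Definition sing_simplex {X : Type} (opn : (X -> Prop) -> Prop) (n : nat)
  (s : (nat -> R) -> X) : Prop :=
  forall U, opn U -> simplex_open n (fun p => U (s p)).

Definition face (i : nat) (p : nat -> R) : nat -> R :=
  fun j => if Nat.ltb j i then p j else if Nat.eqb j i then 0%R else p (j - 1)%nat.

Definition chain (X : Type) := list (Z * ((nat -> R) -> X)).

Definition same_simplex {X : Type} (n : nat) (s t : (nat -> R) -> X) : Prop :=
  forall p, simplex n p -> s p = t p.

Definition coef {X : Type} (n : nat) (c : chain X) (t : (nat -> R) -> X) : Z :=
  fold_right (fun e acc =>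
     ((if excluded_middle_informative (same_simplex n (snd e) t) then fst e else 0%Z)
      + acc)%Z) 0%Z c.

Definition bd {X : Type} (n : nat) (c : chain X) : chain X :=
  match n with
  | O => []
  | S m => flat_map (fun e =>
             map (fun i => ((if Nat.even i then fst e else - fst e)%Z,
                            fun p => snd e (face i p)))
                 (seq 0 (m + 2))) c
  end.

Definition chain_in {X : Type} (opn : (X -> Prop) -> Prop) (n : nat)
  (A : X -> Prop) (c : chain X) : Prop :=
  Forall (fun e => sing_simplex opn n (snd e) /\
                   forall p, simplex n p -> A (snd e p)) c.

(* the n-chain c, as an element of the free abelian group, is supported in A *)
Definition supported_in {X : Type} (n : nat) (A : X -> Prop) (c : chain X) : Prop :=
  forall t, coef n c t <> 0%Z -> forall p, simplex n p -> A (t p).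

(* H_n(A, B) <> 0 for some n: a relative cycle which is not a relative boundary *)
Definition rel_homology_nontrivial {X : Type} (opn : (X -> Prop) -> Prop)
  (A B : X -> Prop) : Prop :=
  exists (n : nat) (c : chain X),
    chain_in opn n A c /\ supported_in (n - 1) B (bd n c) /\
    ~ (exists (d e : chain X), chain_in opn (S n) A d /\ chain_in opn n B e /\
         forall t, coef n c t = (coef n (bd (S n) d) t + coef n e t)%Z).

(* a multivector field is a partition of X; mv x y means y \in [x]_V *)
Definition multivector_field {X : Type} (opn : (X -> Prop) -> Prop)
  (mv : X -> X -> Prop) : Prop :=
  (forall x, mv x x) /\ (forall x y, mv x y -> mv y x) /\
  (forall x y z, mv x y -> mv y z -> mv x z) /\
  (forall x, locally_closed opn (mv x)).

Definition critical {X : Type} (opn : (X -> Prop) -> Prop) (V : X -> Prop) : Prop :=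
  rel_homology_nontrivial opn (cl opn V) (setD (cl opn V) V).

Definition regular {X : Type} (opn : (X -> Prop) -> Prop) (V : X -> Prop) : Prop :=
  ~ critical opn V.

Definition compatible {X : Type} (mv : X -> X -> Prop) (A : X -> Prop) : Prop :=
  forall x y, A x -> mv x y -> A y.

Definition lc_hull {X : Type} (opn : (X -> Prop) -> Prop) (mv : X -> X -> Prop)
  (A : X -> Prop) : X -> Prop :=
  fun x => forall B, locally_closed opn B -> compatible mv B -> incl_set A B -> B x.

Definition Pi {X : Type} (opn : (X -> Prop) -> Prop) (mv : X -> X -> Prop)
  (x : X) : X -> Prop :=
  fun y => cl opn (fun z => z = x) y \/ mv x y.

Definition Pi_set {X : Type} (opn : (X -> Prop) -> Prop) (mv : X -> X -> Prop)
  (S : X -> Prop) : X -> Prop :=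
  fun y => exists x, S x /\ Pi opn mv x y.

(* walks of positive length in G_V with all vertices in A *)
Inductive walk_in {X : Type} (opn : (X -> Prop) -> Prop) (mv : X -> X -> Prop)
  (A : X -> Prop) : X -> X -> Prop :=
| walk_one : forall v w, A v -> A w -> Pi opn mv v w -> walk_in opn mv A v w
| walk_cons : forall v u w, A v -> Pi opn mv v u -> walk_in opn mv A u w ->
    walk_in opn mv A v w.

Definition strongly_connected {X : Type} (opn : (X -> Prop) -> Prop)
  (mv : X -> X -> Prop) (A : X -> Prop) : Prop :=
  forall v w, A v -> A w -> walk_in opn mv A v w.

Definition full_solution {X : Type} (opn : (X -> Prop) -> Prop) (mv : X -> X -> Prop)
  (g : Z -> X) : Prop :=
  forall t, Pi opn mv (g t) (g (t + 1)%Z).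

(* a path: solution with finite (nonempty interval) domain, as a list *)
Fixpoint is_path {X : Type} (opn : (X -> Prop) -> Prop) (mv : X -> X -> Prop)
  (x : X) (l : list X) : Prop :=
  match l with
  | [] => True
  | y :: l' => Pi opn mv x y /\ is_path opn mv y l'
  end.

Definition alpha_raw {X : Type} (g : Z -> X) : X -> Prop :=
  fun x => forall t, (t <= 0)%Z -> exists s, (s <= t)%Z /\ g s = x.
Definition omega_raw {X : Type} (g : Z -> X) : X -> Prop :=
  fun x => forall t, (0 <= t)%Z -> exists s, (t <= s)%Z /\ g s = x.

Definition alpha {X : Type} (opn : (X -> Prop) -> Prop) (mv : X -> X -> Prop)
  (g : Z -> X) : X -> Prop := lc_hull opn mv (alpha_raw g).
Definition omega {X : Type} (opn : (X -> Prop) -> Prop) (mv : X -> X -> Prop)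
  (g : Z -> X) : X -> Prop := lc_hull opn mv (omega_raw g).

Definition in_regular_multivector {X : Type} (opn : (X -> Prop) -> Prop)
  (mv : X -> X -> Prop) (A : X -> Prop) : Prop :=
  exists x, regular opn (mv x) /\ incl_set A (mv x).

Definition essential {X : Type} (opn : (X -> Prop) -> Prop) (mv : X -> X -> Prop)
  (g : Z -> X) : Prop :=
  full_solution opn mv g /\
  ~ (in_regular_multivector opn mv (alpha opn mv g) \/
     in_regular_multivector opn mv (omega opn mv g)).

Definition essential_in {X : Type} (opn : (X -> Prop) -> Prop) (mv : X -> X -> Prop)
  (A : X -> Prop) (g : Z -> X) : Prop :=
  essential opn mv g /\ forall t, A (g t).

Definition Inv {X : Type} (opn : (X -> Prop) -> Prop) (mv : X -> X -> Prop)
  (S : X -> Prop) : X -> Prop :=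
  fun x => S x /\ exists g, essential_in opn mv S g /\ g 0%Z = x.

Definition invariant {X : Type} (opn : (X -> Prop) -> Prop) (mv : X -> X -> Prop)
  (S : X -> Prop) : Prop :=
  forall x, Inv opn mv S x <-> S x.

Definition isolated_invariant {X : Type} (opn : (X -> Prop) -> Prop)
  (mv : X -> X -> Prop) (S : X -> Prop) : Prop :=
  invariant opn mv S /\
  exists N : X -> Prop, is_closed opn N /\ incl_set (Pi_set opn mv S) N /\
    forall (x : X) (l : list X),
      is_path opn mv x l -> N x -> Forall N l ->
      S x -> S (last l x) -> S x /\ Forall S l.

Definition link {X : Type} (opn : (X -> Prop) -> Prop) (mv : X -> X -> Prop)
  (S1 S2 : X -> Prop) (g : Z -> X) : Prop :=
  full_solution opn mv g /\
  (exists x, alpha opn mv g x /\ S1 x) /\ (exists y, omega opn mv g y /\ S2 y).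

Definition morse_predecomposition {X : Type} (opn : (X -> Prop) -> Prop)
  (mv : X -> X -> Prop) (P : Type) (M : P -> X -> Prop) : Prop :=
  (forall p q, p <> q -> forall x, M p x -> ~ M q x) /\
  (forall p, isolated_invariant opn mv (M p)) /\
  (forall g, essential_in opn mv (fun _ => True) g ->
     exists p q, link opn mv (M p) (M q) g).

Definition saturated {X : Type} (opn : (X -> Prop) -> Prop) (mv : X -> X -> Prop)
  (T : X -> Prop) : Prop :=
  invariant opn mv T /\
  forall g, essential_in opn mv (fun _ => True) g ->
    incl_set (alpha opn mv g) T -> incl_set (omega opn mv g) T ->
    forall t, T (g t).

(* Since M_r is invariant, some essential solution phi in M_r passes through
   x in M_r /\ C.  For y in C, strong connectivity gives a closed walk
   x -> y -> x, which we splice into phi at time 0.  The spliced solution has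
   the same alpha- and omega-limit sets as phi; these lie in M_r because M_r,
   being isolated invariant in a finite space, is locally closed and
   V-compatible.  Saturation then puts the whole spliced solution, and hence
   y, into M_r. *)

From Stdlib Require Import ZArith List.
From Stdlib Require Import Classical FunctionalExtensionality PropExtensionality Lia.
Import ListNotations.
Set Implicit Arguments.
Unset Strict Implicit.

Open Scope Z_scope.

Section FiniteSpace.

Variables (X : Type) (opn : (X -> Prop) -> Prop).
Hypothesis Htop : is_topology opn.
Hypothesis Hfin : exists l : list X, forall x, In x l.

Lemma cl_point (x y : X) :
  cl opn (fun z => z = y) x <-> forall U, opn U -> U x -> U y.
Proof.
  split.
  - intros H U oU Ux. destruct (H U oU Ux) as [z [Uz ->]]. exact Uz.
  - intros H U oU Ux. exists y. split; [exact (H U oU Ux) | reflexivity].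
Qed.

Lemma cl_of_cl_point (A : X -> Prop) (u w : X) :
  cl opn (fun z => z = w) u -> cl opn A w -> cl opn A u.
Proof.
  intros Huw Hw U oU Uu. apply (Hw U oU). exact (proj1 (cl_point u w) Huw U oU Uu).
Qed.

Lemma minimal_open_nbhd (x : X) :
  exists V, opn V /\ V x /\ forall z, V z -> cl opn (fun w => w = z) x.
Proof.
  destruct Htop as [HT [_ [HI _]]]. destruct Hfin as [l Hl].
  assert (Hlist : forall l : list X, exists V, opn V /\ V x /\
            forall z, In z l -> V z -> forall U, opn U -> U x -> U z).
  { induction l0 as [|y l0 IH].
    - exists (fun _ => True). repeat split; [exact HT | intros z []].
    - destruct IH as [V [oV [Vx HV]]].
      destruct (classic (forall U, opn U -> U x -> U y)) as [Hy | Hy].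
      + exists V. repeat split; [exact oV | exact Vx |].
        intros z [<- | Hz] Vz; [exact Hy | exact (HV z Hz Vz)].
      + apply not_all_ex_not in Hy as [W HW].
        apply imply_to_and in HW as [oW HW]. apply imply_to_and in HW as [Wx nWy].
        exists (fun z => V z /\ W z). repeat split; [apply HI; assumption | assumption | assumption |].
        intros z [<- | Hz] [Vz Wz]; [contradiction | exact (HV z Hz Vz)]. }
  destruct (Hlist l) as [V [oV [Vx HV]]].
  exists V. repeat split; [exact oV | exact Vx |].
  intros z Vz. apply cl_point. exact (HV z (Hl z) Vz).
Qed.

Lemma cl_exists_point (A : X -> Prop) (w : X) :
  cl opn A w -> exists a, A a /\ cl opn (fun z => z = a) w.
Proof.
  intros Hw. destruct (minimal_open_nbhd w) as [V [oV [Vw HV]]].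
  destruct (Hw V oV Vw) as [a [Va Aa]]. exists a. split; [exact Aa | exact (HV a Va)].
Qed.

Lemma open_of_generalization_closed (A : X -> Prop) :
  (forall x y, A x -> cl opn (fun z => z = y) x -> A y) -> opn A.
Proof.
  intros HA. destruct Htop as [_ [_ [_ HU]]].
  replace A with (fun x => exists V, (opn V /\ forall z, V z -> A z) /\ V x).
  - apply HU. intros V [oV _]. exact oV.
  - apply functional_extensionality. intros x. apply propositional_extensionality. split.
    + intros [V [[_ HV] Vx]]. exact (HV x Vx).
    + intros Ax. destruct (minimal_open_nbhd x) as [V [oV [Vx HV]]].
      exists V. split; [split; [exact oV |] | exact Vx].
      intros z Vz. exact (HA x z Ax (HV z Vz)).
Qed.

(* The hypothesis says that [A] is convex for the specialization preorder. *)
Lemma locally_closed_of_convex (A : X -> Prop) :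
  (forall a z b, A a -> cl opn (fun w => w = a) z -> cl opn (fun w => w = z) b -> A b -> A z) ->
  locally_closed opn A.
Proof.
  intros Hconv. apply open_of_generalization_closed.
  intros u w Hu Huw [Hcw nAw].
  assert (Au : A u).
  { apply NNPP. intros nAu. apply Hu. split; [exact (cl_of_cl_point Huw Hcw) | exact nAu]. }
  destruct (cl_exists_point Hcw) as [a [Aa Haw]].
  exact (nAw (Hconv a w u Aa Haw Huw Au)).
Qed.

End FiniteSpace.

Section IsolatedInvariant.

Variables (X : Type) (opn : (X -> Prop) -> Prop) (mv : X -> X -> Prop).

Lemma Pi_refl (x : X) : Pi opn mv x x.
Proof. left. apply cl_point. auto. Qed.

Lemma isolated_invariant_convex (S : X -> Prop) (a z b : X) :
  isolated_invariant opn mv S ->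
  S a -> Pi opn mv a z -> Pi opn mv z b -> S b -> S z.
Proof.
  intros [_ [N [_ [HN Hpath]]]] Sa Haz Hzb Sb.
  assert (HNS : forall s y, S s -> Pi opn mv s y -> N y) by (intros s y Ss Hy; apply HN; exists s; auto).
  destruct (Hpath a [z; b]) as [_ HF].
  - simpl. tauto.
  - exact (HNS a a Sa (Pi_refl a)).
  - repeat constructor; [exact (HNS a z Sa Haz) | exact (HNS b b Sb (Pi_refl b))].
  - exact Sa.
  - exact Sb.
  - inversion HF. assumption.
Qed.

Lemma isolated_invariant_compatible (S : X -> Prop) :
  (forall x y, mv x y -> mv y x) -> isolated_invariant opn mv S -> compatible mv S.
Proof.
  intros Hsym HS x y Sx Hxy.
  apply (isolated_invariant_convex HS Sx (or_intror Hxy) (or_intror (Hsym x y Hxy)) Sx).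
Qed.

Lemma isolated_invariant_locally_closed (S : X -> Prop) :
  is_topology opn -> (exists l : list X, forall x, In x l) ->
  isolated_invariant opn mv S -> locally_closed opn S.
Proof.
  intros Htop Hfin HS. apply (locally_closed_of_convex Htop Hfin).
  intros a z b Sa Haz Hzb Sb.
  exact (isolated_invariant_convex HS Sa (or_introl Haz) (or_introl Hzb) Sb).
Qed.

End IsolatedInvariant.

Section Solutions.

Variables (X : Type) (opn : (X -> Prop) -> Prop) (mv : X -> X -> Prop).

Definition solution_on (D : Z -> Prop) (g : Z -> X) : Prop :=
  forall t, D t -> Pi opn mv (g t) (g (t + 1)).

Definition glue (f g : Z -> X) (T : Z) : Z -> X :=
  fun t => if t <=? T then f t else g t.

Definition shift (g : Z -> X) (s : Z) : Z -> X := fun t => g (t - s).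

Definition splice (phi p : Z -> X) (n : Z) : Z -> X :=
  glue phi (glue p (shift phi n) n) 0.

Lemma solution_on_weaken (D D' : Z -> Prop) (g : Z -> X) :
  (forall t, D' t -> D t) -> solution_on D g -> solution_on D' g.
Proof. intros HD Hg t Ht. exact (Hg t (HD t Ht)). Qed.

Lemma solution_on_shift (D : Z -> Prop) (g : Z -> X) (s : Z) :
  solution_on D g -> solution_on (fun t => D (t - s)) (shift g s).
Proof.
  intros Hg t Ht. unfold shift. replace (t + 1 - s) with (t - s + 1) by lia. exact (Hg _ Ht).
Qed.

Lemma solution_on_glue (D : Z -> Prop) (f g : Z -> X) (T : Z) :
  f T = g T ->
  solution_on (fun t => D t /\ t < T) f -> solution_on (fun t => D t /\ T <= t) g ->
  solution_on D (glue f g T).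
Proof.
  intros HT Hf Hg t Dt. unfold glue.
  destruct (Z.leb_spec t T), (Z.leb_spec (t + 1) T); try lia.
  - apply Hf. split; [exact Dt | lia].
  - replace t with T in * by lia. rewrite HT. apply Hg. split; [exact Dt | lia].
  - apply Hg. split; [exact Dt | lia].
Qed.

Lemma solution_on_cons (v : X) (p : Z -> X) (n : Z) :
  Pi opn mv v (p 0) -> solution_on (fun t => 0 <= t < n) p ->
  solution_on (fun t => 0 <= t < n + 1) (glue (fun _ => v) (shift p 1) 0).
Proof.
  intros Hv Hp t Ht. unfold glue, shift.
  destruct (Z.leb_spec t 0), (Z.leb_spec (t + 1) 0); try lia.
  - replace (t + 1 - 1) with 0 by lia. exact Hv.
  - replace (t + 1 - 1) with (t - 1 + 1) by lia. apply Hp. lia.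
Qed.

Lemma walk_in_solution (A : X -> Prop) (v w : X) :
  walk_in opn mv A v w ->
  exists n p, 0 < n /\ p 0 = v /\ p n = w /\ solution_on (fun t => 0 <= t < n) p.
Proof.
  intros Hwalk. induction Hwalk as [v w _ _ Hvw | v u w _ Hvu _ [n [p [Hn [Hp0 [Hpn Hp]]]]]].
  - exists 1, (glue (fun _ => v) (shift (fun _ => w) 1) 0).
    split; [lia |]. split; [reflexivity |]. split; [reflexivity |].
    apply (solution_on_cons (n := 0)); [exact Hvw | intros t Ht; lia].
  - exists (n + 1), (glue (fun _ => v) (shift p 1) 0).
    split; [lia |]. split; [reflexivity |]. split.
    + unfold glue, shift. destruct (Z.leb_spec (n + 1) 0); [lia |].
      now replace (n + 1 - 1) with n by lia.
    + apply solution_on_cons; [rewrite Hp0 |]; assumption.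
Qed.

Lemma strongly_connected_loop (A : X -> Prop) (x y : X) :
  strongly_connected opn mv A -> A x -> A y ->
  exists n p k, 0 <= k <= n /\ p 0 = x /\ p k = y /\ p n = x /\
                solution_on (fun t => 0 <= t < n) p.
Proof.
  intros HA Ax Ay.
  destruct (walk_in_solution (HA x y Ax Ay)) as [n1 [p1 [Hn1 [Hp10 [Hp1n Hp1]]]]].
  destruct (walk_in_solution (HA y x Ay Ax)) as [n2 [p2 [Hn2 [Hp20 [Hp2n Hp2]]]]].
  exists (n1 + n2), (glue p1 (shift p2 n1) n1), n1.
  split; [lia |].
  split; [unfold glue; destruct (Z.leb_spec 0 n1); [exact Hp10 | lia] |].
  split; [unfold glue; destruct (Z.leb_spec n1 n1); [exact Hp1n | lia] |].
  split.
  { unfold glue, shift. destruct (Z.leb_spec (n1 + n2) n1); [lia |].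
    now replace (n1 + n2 - n1) with n2 by lia. }
  apply solution_on_glue.
  - unfold shift. now rewrite Z.sub_diag, Hp1n.
  - apply (solution_on_weaken (D := fun t => 0 <= t < n1)); [intros t Ht; lia | exact Hp1].
  - apply (solution_on_weaken (D := fun t => 0 <= t - n1 < n2)); [intros t Ht; lia |].
    exact (solution_on_shift (s := n1) Hp2).
Qed.

Lemma splice_full_solution (phi p : Z -> X) (n : Z) :
  0 <= n -> full_solution opn mv phi -> solution_on (fun t => 0 <= t < n) p ->
  p 0 = phi 0 -> p n = phi 0 -> full_solution opn mv (splice phi p n).
Proof.
  intros Hn Hphi Hp Hp0 Hpn.
  assert (Hsplice : solution_on (fun _ => True) (splice phi p n)).
  { apply solution_on_glue; [| intros s _; apply Hphi |].
    - unfold glue. destruct (Z.leb_spec 0 n); [| lia]. symmetry. exact Hp0.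
    - apply solution_on_glue.
      + unfold shift. now rewrite Z.sub_diag.
      + apply (solution_on_weaken (D := fun t => 0 <= t < n)); [intros s Hs; lia | exact Hp].
      + apply (solution_on_weaken (D := fun t => True)); [trivial |].
        apply (solution_on_shift (D := fun _ => True)). intros s _. apply Hphi. }
  intros t. exact (Hsplice t I).
Qed.

Lemma splice_past (phi p : Z -> X) (n t : Z) : t <= 0 -> splice phi p n t = phi t.
Proof. intros Ht. unfold splice, glue. destruct (Z.leb_spec t 0); [reflexivity | lia]. Qed.

Lemma splice_future (phi p : Z -> X) (n t : Z) :
  0 <= n -> n < t -> splice phi p n t = phi (t - n).
Proof.
  intros Hn Ht. unfold splice, glue, shift.
  destruct (Z.leb_spec t 0), (Z.leb_spec t n); reflexivity || lia.
Qed.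

Lemma splice_loop (phi p : Z -> X) (n t : Z) :
  p 0 = phi 0 -> 0 <= t <= n -> splice phi p n t = p t.
Proof.
  intros Hp0 Ht. unfold splice, glue.
  destruct (Z.leb_spec t 0), (Z.leb_spec t n); try lia.
  - now replace t with 0 by lia.
  - reflexivity.
Qed.

End Solutions.

Section LimitSets.

Variables (X : Type) (opn : (X -> Prop) -> Prop) (mv : X -> X -> Prop).

Lemma alpha_raw_ext (g h : Z -> X) :
  (forall t, t <= 0 -> g t = h t) -> alpha_raw g = alpha_raw h.
Proof.
  intros Hgh. apply functional_extensionality. intros z. apply propositional_extensionality.
  unfold alpha_raw. split; intros H t Ht; destruct (H t Ht) as [s [Hs <-]];
    exists s; (split; [lia |]).
  - symmetry. apply Hgh. lia.
  - apply Hgh. lia.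
Qed.

Lemma omega_raw_shift (g h : Z -> X) (n : Z) :
  0 <= n -> (forall t, n < t -> g t = h (t - n)) -> omega_raw g = omega_raw h.
Proof.
  intros Hn Hgh. apply functional_extensionality. intros z. apply propositional_extensionality.
  unfold omega_raw. split; intros H t Ht.
  - destruct (H (t + n + 1) ltac:(lia)) as [s [Hs <-]].
    exists (s - n). split; [lia | symmetry; apply Hgh; lia].
  - destruct (H (t + 1) ltac:(lia)) as [s [Hs <-]].
    exists (s + n). split; [lia |]. rewrite Hgh by lia. f_equal. lia.
Qed.

Lemma lc_hull_min (A T : X -> Prop) :
  locally_closed opn T -> compatible mv T -> incl_set A T -> incl_set (lc_hull opn mv A) T.
Proof. intros Hlc Hco HAT z Hz. exact (Hz T Hlc Hco HAT). Qed.

Lemma alpha_incl (T : X -> Prop) (g : Z -> X) :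
  locally_closed opn T -> compatible mv T -> (forall t, T (g t)) -> incl_set (alpha opn mv g) T.
Proof.
  intros Hlc Hco Hg. apply lc_hull_min; [exact Hlc | exact Hco |].
  intros z Hz. destruct (Hz 0 ltac:(lia)) as [s [_ <-]]. apply Hg.
Qed.

Lemma omega_incl (T : X -> Prop) (g : Z -> X) :
  locally_closed opn T -> compatible mv T -> (forall t, T (g t)) -> incl_set (omega opn mv g) T.
Proof.
  intros Hlc Hco Hg. apply lc_hull_min; [exact Hlc | exact Hco |].
  intros z Hz. destruct (Hz 0 ltac:(lia)) as [s [_ <-]]. apply Hg.
Qed.

Lemma saturated_contains_loop (T : X -> Prop) (p : Z -> X) (n k : Z) :
  saturated opn mv T -> locally_closed opn T -> compatible mv T ->
  T (p 0) -> p n = p 0 -> 0 <= k <= n -> solution_on opn mv (fun t => 0 <= t < n) p ->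
  T (p k).
Proof.
  intros [Tinv Tsat] Hlc Hco Tp0 Hpn Hk Hp.
  destruct (proj2 (Tinv (p 0)) Tp0) as [_ [phi [[[Hphi Hnreg] HphiT] Hphi0]]].
  set (g := splice phi p n).
  assert (Halpha : alpha opn mv g = alpha opn mv phi).
  { unfold alpha. f_equal. apply alpha_raw_ext. intros t Ht. apply splice_past. exact Ht. }
  assert (Homega : omega opn mv g = omega opn mv phi).
  { unfold omega. f_equal. apply omega_raw_shift with (n := n); [lia |].
    intros t Ht. apply splice_future; lia. }
  rewrite <- (splice_loop (eq_sym Hphi0) Hk).
  apply (Tsat g); [| rewrite Halpha; apply alpha_incl; assumption
               | rewrite Homega; apply omega_incl; assumption].
  split; [split | intros; exact I].
  - apply splice_full_solution; [lia | exact Hphi | exact Hp | congruence | congruence].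
  - rewrite Halpha, Homega. exact Hnreg.
Qed.

End LimitSets.

Theorem lemma4p10 (X : Type) (opn : (X -> Prop) -> Prop)
  (HX : finite_T0_space opn)
  (mv : X -> X -> Prop) (HV : multivector_field opn mv)
  (HXinv : invariant opn mv (fun _ => True))
  (P : Type) (M : P -> X -> Prop) (HM : morse_predecomposition opn mv M)
  (C : X -> Prop) (HCiso : isolated_invariant opn mv C)
  (HCsc : strongly_connected opn mv C)
  (r : P) (HrC : exists x, M r x /\ C x)
  (Hsat : saturated opn mv (M r)) :
  (forall x, C x -> M r x) /\ (forall p, (exists x, M p x /\ C x) <-> p = r).
Proof.
  destruct HX as [Htop [Hfin _]]. destruct HV as [_ [Hsym _]].
  destruct HM as [Hdisj [Hiso _]]. destruct HrC as [x [Mx Cx]].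
  assert (HCM : forall y, C y -> M r y).
  { intros y Cy.
    destruct (strongly_connected_loop HCsc Cx Cy) as (n & p & k & Hk & Hp0 & Hpk & Hpn & Hp).
    rewrite <- Hpk. subst x.
    apply (saturated_contains_loop (n := n) Hsat); try assumption.
    - exact (isolated_invariant_locally_closed Htop Hfin (Hiso r)).
    - exact (isolated_invariant_compatible Hsym (Hiso r)). }
  split; [exact HCM |]. intros q. split.
  - intros [z [Mz Cz]]. apply NNPP. intros Hqr. exact (Hdisj q r Hqr z Mz (HCM z Cz)).
  - intros ->. exists x. split; assumption.
Qed.
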